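(* Let $|\psi\rangle,|\phi\rangle,|e\rangle,|f\rangle$ be unit vectors in $\mathbb{C}^2$ and let $\mathcal{C}$ be the set of all quantum channels on $\mathcal{L}(\mathbb{C}^2)$. Then $$\max_{\Psi\in\mathcal{C}}\left\{\frac12\langle e|\Psi(|\psi\rangle\langle\psi|)|e\rangle+\frac12\langle f|\Psi(|\phi\rangle\langle\phi|)|f\rangle\right\}\le\frac12\left(1+\sqrt{|\langle e|f\rangle|^2+\left(|\langle\psi|\phi\rangle||\langle e|f\rangle|+\sqrt{(1-|\langle\psi|\phi\rangle|^2)(1-|\langle e|f\rangle|^2)}\right)^2}\right).$$
   Context: A quantum channel is a linear, completely positive, trace preserving map on $\mathcal{L}(\mathbb{C}^2)$. *)

From HB Require Import structures.
From mathcomp Require Import all_boot all_order all_algebra.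
From mathcomp Require Import complex.
From mathcomp Require Import reals.
Set Implicit Arguments. Unset Strict Implicit. Unset Printing Implicit Defensive.
Import Order.TTheory GRing.Theory Num.Theory.
Local Open Scope ring_scope.

Section Defs.
Variable R : realType.
Local Notation C := (R[i]).

Definition ip (u v : 'cV[C]_2) : C := \sum_(k < 2) (u k 0)^* * v k 0.

Definition unit_vec (u : 'cV[C]_2) : Prop := ip u u = 1.

Definition proj (u : 'cV[C]_2) : 'M[C]_2 :=
  \matrix_(i < 2, j < 2) (u i 0 * (u j 0)^*).

Definition expect (u : 'cV[C]_2) (M : 'M[C]_2) : C :=
  \sum_(i < 2) \sum_(j < 2) (u i 0)^* * M i j * u j 0.

Definition psd (I : finType) (M : I -> I -> C) : Prop :=
  forall v : I -> C, 0 <= \sum_(p : I) \sum_(q : I) (v p)^* * M p q * v q.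

Definition lin_map (Psi : 'M[C]_2 -> 'M[C]_2) : Prop :=
  forall (a : C) (A B : 'M[C]_2), Psi (a *: A + B) = a *: Psi A + Psi B.

(* complete positivity: id_{M_n} (x) Psi is positive for every n.
   An element of M_n (x) M_2 is given by its 2x2 blocks X p q, p q : 'I_n;
   as an operator on C^n (x) C^2 = C^('I_n * 'I_2) its entries are
   ((p,a),(q,b)) |-> X p q a b. *)
Definition completely_positive (Psi : 'M[C]_2 -> 'M[C]_2) : Prop :=
  forall (n : nat) (X : 'I_n -> 'I_n -> 'M[C]_2),
    psd (fun (x y : 'I_n * 'I_2) => X x.1 y.1 x.2 y.2) ->
    psd (fun (x y : 'I_n * 'I_2) => Psi (X x.1 y.1) x.2 y.2).

Definition trace_preserving (Psi : 'M[C]_2 -> 'M[C]_2) : Prop :=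
  forall A : 'M[C]_2, \tr (Psi A) = \tr A.

Definition quantum_channel (Psi : 'M[C]_2 -> 'M[C]_2) : Prop :=
  [/\ lin_map Psi, completely_positive Psi & trace_preserving Psi].

End Defs.

From HB Require Import structures.
From mathcomp Require Import all_boot all_order all_algebra.
From mathcomp Require Import complex reals ring lra.
Import Order.TTheory GRing.Theory Num.Theory.
Set Implicit Arguments. Unset Strict Implicit.
Local Open Scope ring_scope.

(* Complete positivity, applied to the block matrix of |psi><psi|, |psi><phi|,
   |phi><psi|, |phi><phi|, makes the 2x2 compressions of the image blocks
   positive semidefinite.  In the basis (e, e') with e' orthogonal to e, and with
   P = <e|Psi(|psi><psi|)|e>, Q = <e|Psi(|phi><phi|)|e>, the resulting minor
   inequalities and trace preservation give
     |<psi|phi>| <= sqrt (P Q) + sqrt ((1 - P) (1 - Q)),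
   and expanding f in the basis gives
     <f|Psi(|phi><phi|)|f> <= (|<e|f>| sqrt Q + |<e'|f>| sqrt (1 - Q))^2.
   Write sqrt P = cos a, sqrt Q = cos b, |<psi|phi>| = cos t, |<e|f>| = cos g,
   all angles in [0, pi/2].  The constraint is |a - b| <= t and the quantity to
   bound is cos^2 a + cos^2 (b - g) = 1 + cos (a + b - g) cos (a - b + g).  When
   g >= t this product is at most cos (g - t) = cos t cos g + sin t sin g, which
   is squared under the outer square root; when g < t that square root is
   already at least 1. *)

Section RealBound.
Variable R : rcfType.

Lemma ler_sqrtM (x y1 y2 : R) : 0 <= y1 -> 0 <= y2 -> x ^+ 2 <= y1 * y2 ->
  x <= Num.sqrt y1 * Num.sqrt y2.
Proof.
move=> y1_ge0 y2_ge0 x2_le; rewrite -sqrtrM // (le_trans (ler_norm x)) //.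
by rewrite -sqrtr_sqr ler_sqrt // mulr_ge0.
Qed.

Lemma ler_sqrtDr (x y : R) : 0 <= y -> x <= Num.sqrt (y + x ^+ 2).
Proof.
move=> y_ge0; rewrite (le_trans (ler_norm x)) // -sqrtr_sqr ler_sqrt ?lerDr //.
by rewrite addr_ge0 ?sqr_ge0.
Qed.

Lemma dot_unit_le1 (x1 x2 y1 y2 : R) :
  x1 ^+ 2 + x2 ^+ 2 = 1 -> y1 ^+ 2 + y2 ^+ 2 = 1 -> x1 * y1 + x2 * y2 <= 1.
Proof.
move=> x_unit y_unit.
have := sqr_ge0 (x1 - y1); have := sqr_ge0 (x2 - y2); nra.
Qed.

Lemma sqr_dot_add_sqr_cross (x1 x2 y1 y2 : R) :
  (x1 * y1 + x2 * y2) ^+ 2 + (x1 * y2 - x2 * y1) ^+ 2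
  = (x1 ^+ 2 + x2 ^+ 2) * (y1 ^+ 2 + y2 ^+ 2).
Proof. by ring. Qed.

(* sin g <= cos (t - g) when g <= t. *)
Lemma sin_le_cos_sub (A A' B S : R) : 0 <= A -> 0 <= A' -> 0 <= S ->
  A ^+ 2 + A' ^+ 2 = 1 -> B ^+ 2 + S ^+ 2 = 1 -> A <= B -> S <= A * B + A' * S.
Proof.
move=> A0 A'0 S0 A_unit B_unit AB.
have S_le : S <= A' by rewrite -(ler_pXn2r (n := 2)) ?nnegrE //; nra.
have A'_le1 : A' <= 1 by nra.
nra.
Qed.

(* cos (g - p) <= cos (g - t) when |p| <= t <= g, with (w, z) = (cos p, sin p). *)
Lemma cos_sub_le_cos_sub (w z A A' B S : R) : 0 <= A' -> 0 <= B -> 0 <= S ->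
  w ^+ 2 + z ^+ 2 = 1 -> A ^+ 2 + A' ^+ 2 = 1 -> B ^+ 2 + S ^+ 2 = 1 ->
  B <= A -> A <= w -> B * w + S * z <= A * B + A' * S.
Proof.
move=> A'0 B0 S0 wz_unit A_unit B_unit BA Aw.
have S_ge : A' <= S by rewrite -(ler_pXn2r (n := 2)) ?nnegrE //; nra.
have /ler_normlP[Nz_le z_le] : `|z| <= A'.
  by rewrite -(ler_pXn2r (n := 2)) ?nnegrE ?real_normK ?num_real //; nra.
(* (w, z) and (A, A') are unit vectors: their difference is orthogonal to their sum. *)
have chord : (A' + z) * (A * B + A' * S - (B * w + S * z))
           = (w - A) * (S * (w + A) - B * (A' + z)).
  apply/eqP; rewrite -subr_eq0; apply/eqP.
  transitivity (S * ((A ^+ 2 + A' ^+ 2) - (w ^+ 2 + z ^+ 2))); first by ring.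
  by rewrite A_unit wz_unit subrr mulr0.
have factor_ge0 : 0 <= S * (w + A) - B * (A' + z) by nra.
case: (ltrP 0 (A' + z)) => [pos|].
  by rewrite -subr_ge0 -(pmulr_rge0 _ pos) chord mulr_ge0 // subr_ge0.
nra.
Qed.

Lemma angle_bound (u u' v v' A A' B S : R) :
  0 <= u -> 0 <= v -> 0 <= v' -> 0 <= A -> 0 <= A' -> 0 <= B -> 0 <= S ->
  u ^+ 2 + u' ^+ 2 = 1 -> v ^+ 2 + v' ^+ 2 = 1 ->
  A ^+ 2 + A' ^+ 2 = 1 -> B ^+ 2 + S ^+ 2 = 1 -> A <= u * v + u' * v' ->
  u ^+ 2 + (B * v + S * v') ^+ 2 <= 1 + Num.sqrt (B ^+ 2 + (A * B + A' * S) ^+ 2).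
Proof.
move=> u0 v0 v'0 A0 A'0 B0 S0 u_unit v_unit A_unit B_unit Aw.
set c := B * v + S * v'; set d := B * v' - S * v; set K := A * B + A' * S.
have c0 : 0 <= c by rewrite addr_ge0 ?mulr_ge0.
have K0 : 0 <= K by rewrite addr_ge0 ?mulr_ge0.
have cd_unit : c ^+ 2 + d ^+ 2 = 1.
  by rewrite sqr_dot_add_sqr_cross B_unit v_unit mulr1.
have c_le1 : c <= 1 by rewrite -(mul1r c) -B_unit; nra.
case: (lerP B A) => [BA | AB].
  set w := u * v + u' * v'; set z := u * v' - u' * v.
  have wz_unit : w ^+ 2 + z ^+ 2 = 1.
    by rewrite sqr_dot_add_sqr_cross u_unit v_unit mulr1.
  set X := B * w + S * z; set Y := u * c + u' * - d.
  have X_le : X <= K by apply: cos_sub_le_cos_sub.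
  have Y_le1 : Y <= 1 by apply: dot_unit_le1; rewrite ?sqrrN.
  have XY : X * Y = u ^+ 2 * (c ^+ 2 + d ^+ 2) + c ^+ 2 * (u ^+ 2 + u' ^+ 2)
                   - (u ^+ 2 + u' ^+ 2) * (c ^+ 2 + d ^+ 2).
    by rewrite /X /Y /w /z /c /d; ring.
  rewrite cd_unit u_unit !mulr1 in XY.
  have XpY : X + Y = 2 * u * c by rewrite /X /Y /w /z /c /d; ring.
  have XY_le : X * Y <= K.
    case: (lerP 0 X) => [X0 | X0]; first by nra.
    have : 0 < Y by rewrite -(ltrD2l X) addr0 XpY (lt_le_trans X0) // -mulrA mulr_ge0 ?mulr_ge0.
    nra.
  have := ler_sqrtDr K (sqr_ge0 B); lra.
have S_le : S <= K by apply: sin_le_cos_sub => //; apply: ltW.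
have : 1 <= Num.sqrt (B ^+ 2 + K ^+ 2).
  rewrite -sqrtr1 ler_sqrt ?addr_ge0 ?sqr_ge0 //.
  by rewrite -{1}B_unit lerD2l ler_pXn2r ?nnegrE.
nra.
Qed.

Lemma overlap_sum_bound (P Q t1 t2 A A' B S m q : R) :
  0 <= P -> 0 <= Q -> 0 <= A -> 0 <= A' -> 0 <= B -> 0 <= S ->
  0 <= 1 - P -> 0 <= 1 - Q ->
  t1 ^+ 2 <= P * Q -> t2 ^+ 2 <= (1 - P) * (1 - Q) -> A <= t1 + t2 ->
  A ^+ 2 + A' ^+ 2 = 1 -> B ^+ 2 + S ^+ 2 = 1 ->
  m ^+ 2 <= Q * (1 - Q) -> q <= B ^+ 2 * Q + S ^+ 2 * (1 - Q) + 2 * B * S * m ->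
  P + q <= 1 + Num.sqrt (B ^+ 2 + (A * B + Num.sqrt ((1 - A ^+ 2) * (1 - B ^+ 2))) ^+ 2).
Proof.
move=> P0 Q0 A0 A'0 B0 S0 P1 Q1 t1_le t2_le At A_unit B_unit m_le q_le.
set u := Num.sqrt P; set u' := Num.sqrt (1 - P).
set v := Num.sqrt Q; set v' := Num.sqrt (1 - Q).
have u_sqr : u ^+ 2 = P by rewrite sqr_sqrtr.
have v_sqr : v ^+ 2 = Q by rewrite sqr_sqrtr.
have v'_sqr : v' ^+ 2 = 1 - Q by rewrite sqr_sqrtr.
have u_unit : u ^+ 2 + u' ^+ 2 = 1 by rewrite u_sqr sqr_sqrtr // addrC subrK.
have v_unit : v ^+ 2 + v' ^+ 2 = 1 by rewrite v_sqr v'_sqr addrC subrK.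
have Aw : A <= u * v + u' * v'.
  exact: le_trans At (lerD (ler_sqrtM P0 Q0 t1_le) (ler_sqrtM P1 Q1 t2_le)).
have {}q_le : q <= (B * v + S * v') ^+ 2.
  apply: (le_trans q_le); rewrite -v'_sqr -v_sqr.
  have : B * S * m <= B * S * (v * v') by rewrite ler_wpM2l ?mulr_ge0 ?ler_sqrtM.
  nra.
have -> : Num.sqrt ((1 - A ^+ 2) * (1 - B ^+ 2)) = A' * S.
  have -> : 1 - A ^+ 2 = A' ^+ 2 by rewrite -A_unit addrC addKr.
  have -> : 1 - B ^+ 2 = S ^+ 2 by rewrite -B_unit addrC addKr.
  by rewrite -exprMn sqrtr_sqr ger0_norm ?mulr_ge0.
rewrite -u_sqr; apply: le_trans (angle_bound _ _ _ A0 A'0 B0 S0 u_unit v_unit A_unit B_unit Aw).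
- by rewrite lerD2l.
all: exact: sqrtr_ge0.
Qed.

End RealBound.

Section ComplexTransfer.
Variable R : rcfType.
Local Notation rC := (real_complex R).
Local Notation rCE :=
  (rmorph1 rC, rmorph_nat rC, rmorphXn rC, rmorphM rC, rmorphB rC, rmorphD rC).

Lemma ger0_complexP (x : R[i]) : 0 <= x -> exists2 r : R, x = rC r & 0 <= r.
Proof.
move=> x_ge0; have x_real := RRe_real (ger0_real x_ge0).
by exists (complex.Re x); rewrite // -lecR x_real.
Qed.

Lemma sqrtC_real (x : R) : 0 <= x -> sqrtC (rC x) = rC (Num.sqrt x).
Proof. by move=> x_ge0; rewrite -{1}(sqr_sqrtr x_ge0) rmorphXn sqrCK // ler0c sqrtr_ge0. Qed.

Lemma overlap_sum_boundC (P Q t1 t2 A A' B S m q : R[i]) :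
  0 <= P -> 0 <= Q -> 0 <= t1 -> 0 <= t2 -> 0 <= A -> 0 <= A' -> 0 <= B -> 0 <= S ->
  0 <= m -> 0 <= q ->
  0 <= 1 - P -> 0 <= 1 - Q ->
  t1 ^+ 2 <= P * Q -> t2 ^+ 2 <= (1 - P) * (1 - Q) -> A <= t1 + t2 ->
  A ^+ 2 + A' ^+ 2 = 1 -> B ^+ 2 + S ^+ 2 = 1 ->
  m ^+ 2 <= Q * (1 - Q) -> q <= B ^+ 2 * Q + S ^+ 2 * (1 - Q) + 2 * B * S * m ->
  P + q <= 1 + sqrtC (B ^+ 2 + (A * B + sqrtC ((1 - A ^+ 2) * (1 - B ^+ 2))) ^+ 2).
Proof.
move=> /ger0_complexP[{}P -> P0] /ger0_complexP[{}Q -> Q0].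
move=> /ger0_complexP[{}t1 -> _] /ger0_complexP[{}t2 -> _].
move=> /ger0_complexP[{}A -> A0] /ger0_complexP[{}A' -> A'0].
move=> /ger0_complexP[{}B -> B0] /ger0_complexP[{}S -> S0].
move=> /ger0_complexP[{}m -> _] /ger0_complexP[{}q -> _].
have lift_le (x y : R) : rC x <= rC y -> x <= y by rewrite lecR.
have lift_eq (x y : R) : rC x = rC y -> x = y by apply: complexI.
rewrite -!rCE => /lift_le P1 /lift_le Q1 /lift_le t1_le /lift_le t2_le /lift_le At.
move=> /lift_eq A_unit /lift_eq B_unit /lift_le m_le /lift_le q_le.
have AB_ge0 : 0 <= (1 - A ^+ 2) * (1 - B ^+ 2) by apply: mulr_ge0; nra.
rewrite sqrtC_real // -!rCE sqrtC_real ?addr_ge0 ?sqr_ge0 // -!rCE lecR.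
exact: (overlap_sum_bound P0 Q0 A0 A'0 B0 S0 P1 Q1 t1_le t2_le At A_unit B_unit m_le q_le).
Qed.

End ComplexTransfer.

Section Qubit.
Variable R : realType.
Local Notation C := R[i].
Local Notation vec := 'cV[C]_2.

Lemma sum2 (F : 'I_2 -> C) : \sum_(i < 2) F i = F ord0 + F ord_max.
Proof. by rewrite big_ord_recl big_ord1; congr (_ + F _); apply: val_inj. Qed.

Lemma addC_conj_le_norm (w : C) : w + w^* <= 2 * `|w|.
Proof. by rewrite -ler_pdivrMl // mulrC -ReE (leif_Re_Creal w).1. Qed.

Section PSD2.
Variables m11 m12 m21 m22 : C.
Let form2 (l u : C) := l^* * l * m11 + l^* * u * m12 + u^* * l * m21 + u^* * u * m22.
Hypothesis form2_ge0 : forall l u, 0 <= form2 l u.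

Lemma psd2_diag_ge0 : 0 <= m11 /\ 0 <= m22.
Proof.
have := form2_ge0 1 0; have := form2_ge0 0 1.
by rewrite /form2 conjC0 conjC1 !(mul0r, mulr0, addr0, add0r, mul1r).
Qed.

Lemma psd2_hermitian : m21 = m12^*.
Proof.
have [m11_ge0 m22_ge0] := psd2_diag_ge0.
pose d := m21 - m12^*.
have defect l u : (form2 l u)^* - form2 l u = l^* * u * d^* - u^* * l * d.
  rewrite /form2 /d !(rmorphD, rmorphN, rmorphM) /= !conjCK.
  by rewrite (geC0_conj m11_ge0) (geC0_conj m22_ge0); ring.
have {}defect l u : l^* * u * d^* = u^* * l * d.
  by apply/eqP; rewrite -subr_eq0 -defect geC0_conj ?subrr.
have d_real : d^* = d by have := defect 1 1; rewrite conjC1 !mul1r.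
have := defect 1 'i; rewrite conjC1 conjCi d_real mul1r mulr1 mulNr => /eqP.
rewrite -addr_eq0 -mulr2n -mulr_natr mulf_eq0 pnatr_eq0 orbF mulf_eq0 /d subr_eq0.
by rewrite -normr_eq0 normCi oner_eq0 => /eqP.
Qed.

Lemma psd2_det : `|m12| ^+ 2 <= m11 * m22.
Proof.
have form2_conj l c : l \is Num.real -> c \is Num.real ->
    form2 l (- c * m12^*) = l ^+ 2 * m11 - 2 * l * c * `|m12| ^+ 2 + c ^+ 2 * `|m12| ^+ 2 * m22.
  move=> /CrealP l_real /CrealP c_real.
  rewrite /form2 psd2_hermitian normCK !(rmorphM, rmorphN) /= conjCK l_real c_real; ring.
have [m11_ge0 m22_ge0] := psd2_diag_ge0.
have [m22_0 | m22_neq0] := eqVneq m22 0.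
  rewrite m22_0 mulr0.
  have := form2_ge0 (`|m12| ^+ 2) (- (m11 + 1) * m12^*).
  rewrite form2_conj ?rpredX ?normr_real ?rpredD ?ger0_real // m22_0 mulr0 addr0.
  set k := `|m12| ^+ 2.
  have -> : k ^+ 2 * m11 - 2 * k * (m11 + 1) * k = - (k ^+ 2 * (m11 + 2)) by ring.
  rewrite oppr_ge0 pmulr_lle0 ?ltr_wpDl // => k2_le0.
  by rewrite -(ler_pXn2r (n := 2)) ?nnegrE ?expr0n ?exprn_ge0.
have m22_gt0 : 0 < m22 by rewrite lt_def m22_neq0 m22_ge0.
have := form2_ge0 m22 (- 1 * m12^*).
rewrite form2_conj ?ger0_real //.
have -> : m22 ^+ 2 * m11 - 2 * m22 * 1 * `|m12| ^+ 2 + 1 ^+ 2 * `|m12| ^+ 2 * m22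
          = m22 * (m11 * m22 - `|m12| ^+ 2) by ring.
by rewrite pmulr_rge0 // subr_ge0.
Qed.

End PSD2.

Definition braket (x : vec) (M : 'M[C]_2) (y : vec) : C :=
  \sum_(i < 2) \sum_(j < 2) (x i 0)^* * M i j * y j 0.

Definition outer (u w : vec) : 'M[C]_2 := \matrix_(i, j) (u i 0 * (w j 0)^*).

Definition orth (e : vec) : vec :=
  \col_i (if i == ord0 then - (e ord_max 0)^* else (e ord0 0)^*).

Lemma braketZ (x y : vec) M a b : braket (a *: x) M (b *: y) = a^* * b * braket x M y.
Proof. rewrite /braket !sum2 !mxE !rmorphM /=; ring. Qed.

Lemma braket_comb (x y : vec) M a b :
  braket (a *: x + b *: y) M (a *: x + b *: y) =
  a^* * a * braket x M x + a^* * b * braket x M y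
  + b^* * a * braket y M x + b^* * b * braket y M y.
Proof. rewrite /braket !sum2 !mxE !rmorphD !rmorphM /=; ring. Qed.

Lemma unit_vecE (e : vec) :
  unit_vec e -> (e ord0 0)^* * e ord0 0 + (e ord_max 0)^* * e ord_max 0 = 1.
Proof. by rewrite /unit_vec /ip sum2. Qed.

Lemma mxtrace_orth (e : vec) M :
  unit_vec e -> \tr M = braket e M e + braket (orth e) M (orth e).
Proof.
move=> /unit_vecE e_unit; rewrite /mxtrace /braket !sum2 !mxE /= !rmorphN /= !conjCK.
rewrite -[LHS]mulr1 -e_unit; ring.
Qed.

Lemma mxtrace_outer (u w : vec) : \tr (outer u w) = ip w u.
Proof. rewrite /mxtrace /ip !sum2 !mxE; ring. Qed.

Lemma orth_decomp (e f : vec) :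
  unit_vec e -> f = ip e f *: e + ip (orth e) f *: orth e.
Proof.
move=> /unit_vecE e_unit; apply/matrixP => i j; rewrite (ord1 j).
have [->|->] : i = ord0 \/ i = ord_max.
  by case: i => [[|[|i]] //= ?]; [left | right]; apply: val_inj.
all: rewrite !mxE /ip !sum2 !mxE /= !rmorphN /= !conjCK -[LHS]mulr1 -e_unit; ring.
Qed.

Lemma parseval (e f : vec) :
  unit_vec e -> unit_vec f -> `|ip e f| ^+ 2 + `|ip (orth e) f| ^+ 2 = 1.
Proof.
move=> /unit_vecE e_unit /unit_vecE f_unit.
rewrite !normCKC /ip !sum2 !mxE /= !(rmorphD, rmorphM, rmorphN) /= !conjCK.
rewrite -[RHS]mulr1 -{1}e_unit -f_unit; ring.
Qed.

Lemma ip_conjC (u w : vec) : (ip u w)^* = ip w u.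
Proof. rewrite /ip !sum2 !(rmorphD, rmorphM) /= !conjCK; ring. Qed.

Section PositiveMatrix.
Variable M : 'M[C]_2.
Hypothesis M_psd : forall g, 0 <= braket g M g.

Let M_form2_ge0 (x y : vec) l u :
  0 <= l^* * l * braket x M x + l^* * u * braket x M y
       + u^* * l * braket y M x + u^* * u * braket y M y.
Proof. by rewrite -braket_comb. Qed.

Lemma braket_conj (x y : vec) : braket y M x = (braket x M y)^*.
Proof. exact: psd2_hermitian (M_form2_ge0 x y). Qed.

Lemma braket_cauchy_schwarz (x y : vec) :
  `|braket x M y| ^+ 2 <= braket x M x * braket y M y.
Proof. exact: psd2_det (M_form2_ge0 x y). Qed.

Lemma braket_orth_le (e f : vec) : unit_vec e ->
  braket f M f <= `|ip e f| ^+ 2 * braket e M e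
                  + `|ip (orth e) f| ^+ 2 * braket (orth e) M (orth e)
                  + 2 * `|ip e f| * `|ip (orth e) f| * `|braket e M (orth e)|.
Proof.
move=> e_unit; rewrite [in braket f M f](orth_decomp f e_unit) braket_comb (braket_conj e (orth e)) !normCKC.
set w := (ip e f)^* * ip (orth e) f * braket e M (orth e).
have -> : (ip (orth e) f)^* * ip e f * (braket e M (orth e))^* = w^*.
  by rewrite /w !rmorphM /= conjCK; ring.
have -> : 2 * `|ip e f| * `|ip (orth e) f| * `|braket e M (orth e)| = 2 * `|w|.
  by rewrite /w !normrM norm_conjC !mulrA.
have -> (a b : C) : a + w + w^* + b = a + b + (w + w^*) by ring.
by rewrite lerD2l addC_conj_le_norm.
Qed.

End PositiveMatrix.

Lemma sum_pair2 (F : 'I_2 * 'I_2 -> C) : \sum_x F x =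
  F (ord0, ord0) + F (ord0, ord_max) + F (ord_max, ord0) + F (ord_max, ord_max).
Proof.
rewrite (eq_bigr (fun p => F (p.1, p.2))); last by case.
by rewrite -(pair_bigA _ (fun i j => F (i, j))) /= !sum2 addrA.
Qed.

(* CP is applied to the positive block matrix |v><v| with v = psi (+) phi in C^2 (x) C^2. *)
Lemma cp_block_ge0 (Psi : 'M[C]_2 -> 'M[C]_2) (psi phi g h : vec) :
  completely_positive Psi ->
  0 <= braket g (Psi (proj psi)) g + braket g (Psi (outer psi phi)) h
       + braket h (Psi (outer phi psi)) g + braket h (Psi (proj phi)) h.
Proof.
move=> Psi_cp.
pose U (p : 'I_2) := if p == ord0 then psi else phi.
pose X (p q : 'I_2) := outer (U p) (U q).
have X_psd : psd (fun x y : 'I_2 * 'I_2 => X x.1 y.1 x.2 y.2).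
  move=> v; pose s := \sum_(y : 'I_2 * 'I_2) (U y.1 y.2 0)^* * v y.
  suff -> : \sum_x \sum_y (v x)^* * X x.1 y.1 x.2 y.2 * v y = s^* * s.
    by rewrite mulrC mul_conjC_ge0.
  rewrite /s rmorph_sum mulr_suml; apply: eq_bigr => x _.
  rewrite mulr_sumr; apply: eq_bigr => y _.
  by rewrite /X mxE !rmorphM /= conjCK; ring.
pose v (x : 'I_2 * 'I_2) := if x.1 == ord0 then g x.2 0 else h x.2 0.
have := Psi_cp 2 X X_psd v; rewrite !sum_pair2 /braket !sum2 /v /X /U /=.
rewrite -[outer psi psi]/(proj psi) -[outer phi phi]/(proj phi).
by congr (0 <= _); ring.
Qed.

Section Channel.
Variables (Psi : 'M[C]_2 -> 'M[C]_2) (psi phi : vec).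
Hypothesis Psi_cp : completely_positive Psi.
Local Notation rho := (Psi (proj psi)).
Local Notation sig := (Psi (proj phi)).

Lemma block_minors (x : vec) :
  [/\ 0 <= braket x rho x, 0 <= braket x sig x
    & `|braket x (Psi (outer psi phi)) x| ^+ 2 <= braket x rho x * braket x sig x].
Proof.
have form2_ge0 (l u : C) :
    0 <= l^* * l * braket x rho x + l^* * u * braket x (Psi (outer psi phi)) x
         + u^* * l * braket x (Psi (outer phi psi)) x + u^* * u * braket x sig x.
  by rewrite -!braketZ; apply: cp_block_ge0.
have [rho_ge0 sig_ge0] := psd2_diag_ge0 form2_ge0.
by split => //; apply: psd2_det form2_ge0.
Qed.

End Channel.

Lemma braket_orth_channel (Psi : 'M[C]_2 -> 'M[C]_2) (u e : vec) :
  trace_preserving Psi -> unit_vec u -> unit_vec e ->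
  braket (orth e) (Psi (proj u)) (orth e) = 1 - braket e (Psi (proj u)) e.
Proof.
move=> Psi_tp u_unit e_unit.
by rewrite -u_unit -mxtrace_outer -Psi_tp (mxtrace_orth _ e_unit) addrC addKr.
Qed.

End Qubit.

Theorem corollary5 (R : realType) (psi phi e f : 'cV[R[i]]_2)
  (Hpsi : unit_vec psi) (Hphi : unit_vec phi)
  (He : unit_vec e) (Hf : unit_vec f)
  (Psi : 'M[R[i]]_2 -> 'M[R[i]]_2) (HPsi : quantum_channel Psi) :
  let a := `|ip psi phi| in
  let b := `|ip e f| in
  2^-1 * expect e (Psi (proj psi)) + 2^-1 * expect f (Psi (proj phi))
  <= 2^-1 * (1 + sqrtC (b ^+ 2 + (a * b + sqrtC ((1 - a ^+ 2) * (1 - b ^+ 2))) ^+ 2)).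
Proof.
cbv zeta; case: HPsi => _ Psi_cp Psi_tp.
rewrite -!mulrDr ler_wpM2l ?invr_ge0 ?ler0n //.
have [P_ge0 Q_ge0 t1_le] := block_minors psi phi Psi_cp e.
have [P1_ge0 Q1_ge0 t2_le] := block_minors psi phi Psi_cp (orth e).
rewrite !braket_orth_channel // in P1_ge0 Q1_ge0 t2_le.
have sig_psd g : 0 <= braket g (Psi (proj phi)) g by case: (block_minors psi phi Psi_cp g).
have A_le : `|ip psi phi| <= `|braket e (Psi (outer psi phi)) e|
                              + `|braket (orth e) (Psi (outer psi phi)) (orth e)|.
  by rewrite -norm_conjC ip_conjC -mxtrace_outer -Psi_tp (mxtrace_orth _ He) ler_normD.
have m_le := braket_cauchy_schwarz sig_psd e (orth e).
have q_le := braket_orth_le sig_psd f He.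
rewrite braket_orth_channel // in m_le q_le.
exact: (overlap_sum_boundC P_ge0 Q_ge0 (normr_ge0 _) (normr_ge0 _) (normr_ge0 _)
  (normr_ge0 _) (normr_ge0 _) (normr_ge0 _) (normr_ge0 _) (sig_psd f) P1_ge0 Q1_ge0
  t1_le t2_le A_le (parseval Hpsi Hphi) (parseval He Hf) m_le q_le).
Qed.
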